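(* Let $Q$ be a connected quiver and $W$ a complex vector space of dimension $n$. The moduli space of invertible quiver representations $\mathcal{M}^{inv}_W(Q)=\mathcal{R}^{inv}_W(Q)/\!\!/G_W(Q)$ is isomorphic, as an affine algebraic variety, to the character variety $\mathrm{Hom}(F_r,\mathsf{GL}(n,\mathbb{C}))/\!\!/\mathsf{GL}(n,\mathbb{C})$, where $r=b_1(Q)$ and $F_r$ is the free group of rank $r$.
   Context: A quiver $Q=(Q_V,Q_A)$ is a finite directed graph; each arrow $a$ has head $h_a$ and tail $t_a$; $b_1(Q)$ is the rank of $H_1(Q,\mathbb{Z})$ of its underlying 1-dimensional CW complex. $\mathcal{R}_W(Q)=\bigoplus_{a\in Q_A}\mathrm{End}(W)$, and $G_W(Q)=\mathsf{GL}(W)^{Q_V}$ acts by $(g\cdot x)(a)=g_{h_a}x(a)g_{t_a}^{-1}$. $\mathcal{R}^{inv}_W(Q)\subset\mathcal{R}_W(Q)$ is the set of $x$ with $x(a)\in\mathsf{GL}(W)$ for all $a$; the GIT quotient is taken for the $G_W(Q)$-action. The character variety is the GIT quotient by simultaneous conjugation. *)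

From mathcomp Require Import all_boot all_algebra.
From mathcomp Require Import complex.
From mathcomp Require Import Rstruct.
From Stdlib Require Import Reals.

Set Implicit Arguments.
Unset Strict Implicit.
Unset Printing Implicit Defensive.

Import GRing.Theory Num.Theory.
Local Open Scope ring_scope.

Definition C : numClosedFieldType := Rdefinitions.R[i].

(* A quiver is given by a finite vertex type V, a finite arrow type A, and   *)
(* head / tail maps h t : A -> V.                                            *)

Definition quiver_adj (V A : finType) (h t : A -> V) : rel V :=
  fun x y => [exists a : A, ((h a == x) && (t a == y)) || ((t a == x) && (h a == y))].

Definition quiver_connected (V A : finType) (h t : A -> V) : Prop :=
  (leq 1 #|V|) /\ forall u v : V, connect (quiver_adj h t) u v.

(* Boundary map d_1 : Z^{Q_A} -> Z^{Q_V} of the 1-dimensional CW complex,    *)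
(* d_1(a) = h_a - t_a, written as a matrix (row a = image of a) over Q.      *)
Definition boundary_mx (V A : finType) (h t : A -> V) : 'M[rat]_(#|A|, #|V|) :=
  \matrix_(i < #|A|, j < #|V|)
     ((enum_val j == h (enum_val i))%:R - (enum_val j == t (enum_val i))%:R).

(* b_1(Q) = rank of H_1(Q, Z) = rank of ker d_1 = #|Q_A| - rank(d_1). *)
Definition b1 (V A : finType) (h t : A -> V) : nat :=
  subn #|A| (\rank (boundary_mx h t)).

Definition GLtup (I : Type) (n : nat) :=
  {x : I -> 'M[C]_n | forall i, x i \in unitmx}.

(* Regular functions on the affine variety GL(n,C)^I : the C-algebra         *)
(* generated by the matrix entries and the inverses of the determinants,     *)
Inductive regular (I : finType) (n : nat) : (GLtup I n -> C) -> Prop :=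
| reg_const (c : C) : regular (fun _ => c)
| reg_entry (i : I) (j k : 'I_n) : regular (fun x => sval x i j k)
| reg_invdet (i : I) : regular (fun x => (\det (sval x i))^-1)
| reg_add f g : regular f -> regular g -> regular (fun x => f x + g x)
| reg_mul f g : regular f -> regular g -> regular (fun x => f x * g x).

Definition quiver_invariant (V A : finType) (h t : A -> V) (n : nat)
    (f : GLtup A n -> C) : Prop :=
  forall (g : V -> 'M[C]_n) (x : GLtup A n), (forall v, g v \in unitmx) ->
  forall hy : (forall a, (g (h a) *m sval x a *m invmx (g (t a))) \in unitmx),
    f (exist _ (fun a => g (h a) *m sval x a *m invmx (g (t a))) hy) = f x.

(* Coordinate ring of the GIT quotient M^inv_W(Q) = R^inv_W(Q) // G_W(Q):   *)
(* the G_W(Q)-invariant regular functions on R^inv_W(Q).                     *)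
Definition quiver_inv_fun (V A : finType) (h t : A -> V) (n : nat)
    (f : GLtup A n -> C) : Prop :=
  regular f /\ quiver_invariant h t f.

(* Hom(F_r, GL(n,C)) = GL(n,C)^r (images of the free generators), with       *)
(* GL(n,C) acting by simultaneous conjugation.                               *)
Definition conj_invariant (r n : nat) (f : GLtup 'I_r n -> C) : Prop :=
  forall (g : 'M[C]_n) (x : GLtup 'I_r n), g \in unitmx ->
  forall hy : (forall i, (g *m sval x i *m invmx g) \in unitmx),
    f (exist _ (fun i => g *m sval x i *m invmx g) hy) = f x.

(* Coordinate ring of the character variety Hom(F_r, GL(n,C)) // GL(n,C). *)
Definition charvar_fun (r n : nat) (f : GLtup 'I_r n -> C) : Prop :=
  regular f /\ conj_invariant f.

(* An isomorphism of C-algebras between two subalgebras P, Q of function   *)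
(* algebras (X -> C), (Y -> C) (operations pointwise).  Affine varieties    *)
(* are isomorphic iff their coordinate rings are isomorphic C-algebras.      *)
Definition calg_iso (X Y : Type) (P : (X -> C) -> Prop) (Q : (Y -> C) -> Prop)
    (phi : (X -> C) -> (Y -> C)) : Prop :=
  [/\ (forall f, P f -> Q (phi f)),
      (forall f1 f2, P f1 -> P f2 -> phi f1 = phi f2 -> f1 = f2),
      (forall F, Q F -> exists2 f, P f & phi f = F),
      (forall c : C, phi (fun _ => c) = (fun _ => c)) &
      (forall f1 f2, P f1 -> P f2 ->
         phi (fun x => f1 x + f2 x) = (fun y => phi f1 y + phi f2 y) /\
         phi (fun x => f1 x * f2 x) = (fun y => phi f1 y * phi f2 y))].

(* Fix a breadth-first spanning tree of Q rooted at v0.  It has |Q_V| - 1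
   arrows and, as the left kernel of d_1 is spanned by the constant vector,
   exactly b_1(Q) arrows lie off the tree.  Multiplying x along tree paths from
   v0 gives a gauge [gauge x] : Q_V -> GL(W) moving x to a representation that
   is the identity on every tree arrow, and [gauge (k . x) v] equals
   [k v0 * gauge x v * (k v)^-1].  Reading the gauge-fixed representation off
   the cotree arrows is therefore a regular retraction of R^inv_W(Q) onto the
   slice of representations trivial on the tree, intertwining the action of
   G_W(Q) with simultaneous conjugation by the root component.  Restriction of
   functions to the slice and composition with the retraction are then
   mutually inverse between the two rings of invariants. *)

From mathcomp Require Import all_boot all_algebra.
From Stdlib Require Import FunctionalExtensionality.

Set Implicit Arguments.
Unset Strict Implicit.
Unset Printing Implicit Defensive.

Import GRing.Theory Num.Theory.
Local Open Scope ring_scope.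

Lemma GLtup_eq (I : Type) (n : nat) (x y : GLtup I n) : sval x = sval y -> x = y.
Proof.
case: x y => [x ux] [y uy] /= exy; subst y; congr exist.
apply: functional_extensionality_dep => i; exact: eq_irrelevance.
Qed.

Lemma invmx_mul (R : comUnitRingType) (n : nat) (P Q : 'M[R]_n) :
  P \in unitmx -> Q \in unitmx -> invmx (P *m Q) = invmx Q *m invmx P.
Proof.
move=> uP uQ; have uPQ : P *m Q \in unitmx by rewrite unitmx_mul uP uQ.
have PQR : P *m Q *m (invmx Q *m invmx P) = 1%:M by rewrite mulmxA mulmxK ?mulmxV.
by rewrite -[LHS]mulmx1 -PQR mulKmx.
Qed.

Section RegularFunctions.
Variables (I : finType) (n : nat).
Implicit Types (f g : GLtup I n -> C).

Lemma eq_regular f g : f =1 g -> regular f = regular g.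
Proof. by move=> /functional_extensionality ->. Qed.

Lemma regular_sum (J : Type) (s : seq J) (P : pred J) (F : J -> GLtup I n -> C) :
  (forall j, regular (F j)) -> regular (fun x => \sum_(j <- s | P j) F j x).
Proof.
move=> regF; elim: s => [|j s IHs].
  by under eq_regular => x do rewrite big_nil; exact: reg_const.
under eq_regular => x do rewrite big_cons.
by case: (P j) => //; exact: reg_add.
Qed.

Lemma regular_prod (J : Type) (s : seq J) (P : pred J) (F : J -> GLtup I n -> C) :
  (forall j, regular (F j)) -> regular (fun x => \prod_(j <- s | P j) F j x).
Proof.
move=> regF; elim: s => [|j s IHs].
  by under eq_regular => x do rewrite big_nil; exact: reg_const.
under eq_regular => x do rewrite big_cons.
by case: (P j) => //; exact: reg_mul.
Qed.

Definition regular_mx m p (M : GLtup I n -> 'M[C]_(m, p)) :=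
  forall i j, regular (fun x => M x i j).

Definition regular_GL (M : GLtup I n -> 'M[C]_n) :=
  [/\ regular_mx M, regular (fun x => (\det (M x))^-1) & forall x, M x \in unitmx].

Lemma regular_det m (M : GLtup I n -> 'M[C]_m) :
  regular_mx M -> regular (fun x => \det (M x)).
Proof.
move=> regM; apply: regular_sum => s; apply: reg_mul; first exact: reg_const.
by apply: regular_prod => i; exact: regM.
Qed.

Lemma regular_mx_mul (M N : GLtup I n -> 'M[C]_n) :
  regular_mx M -> regular_mx N -> regular_mx (fun x => M x *m N x).
Proof.
move=> regM regN i j; under eq_regular => x do rewrite mxE.
by apply: regular_sum => k; exact: reg_mul.
Qed.

Lemma regular_mx_inv (M : GLtup I n -> 'M[C]_n) :
  regular_GL M -> regular_mx (fun x => invmx (M x)).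
Proof.
case=> regM regdet unitM i j; under eq_regular => x do rewrite /invmx unitM !mxE.
apply: reg_mul => //; apply: reg_mul; first exact: reg_const.
apply: (@regular_det _ (fun x => row' j (col' i (M x)))) => k l.
by under eq_regular => x do rewrite !mxE; exact: regM.
Qed.

Lemma regular_GL_mul (M N : GLtup I n -> 'M[C]_n) :
  regular_GL M -> regular_GL N -> regular_GL (fun x => M x *m N x).
Proof.
case=> regM detM unitM [regN detN unitN]; split.
- exact: regular_mx_mul.
- by under eq_regular => x do rewrite det_mulmx invfM; exact: reg_mul.
- by move=> x; rewrite unitmx_mul unitM unitN.
Qed.

Lemma regular_GL_inv (M : GLtup I n -> 'M[C]_n) :
  regular_GL M -> regular_GL (fun x => invmx (M x)).
Proof.
move=> regGM; have [regM _ unitM] := regGM; split.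
- exact: regular_mx_inv.
- by under eq_regular => x do rewrite det_inv invrK; exact: regular_det.
- by move=> x; rewrite unitmx_inv.
Qed.

Lemma regular_GL1 : regular_GL (fun _ => 1%:M).
Proof. by split=> [i j||x]; [exact: reg_const | exact: reg_const | exact: unitmx1]. Qed.

Lemma regular_GL_coord (i : I) : regular_GL (fun x => sval x i).
Proof.
split=> [j k||x]; [exact: reg_entry | exact: reg_invdet | exact: (svalP x i)].
Qed.

End RegularFunctions.

Lemma regular_comp (I J : finType) (n : nat) (Phi : GLtup J n -> GLtup I n) f :
  (forall i, regular_GL (fun y => sval (Phi y) i)) ->
  regular f -> regular (fun y => f (Phi y)).
Proof.
move=> regPhi; elim=> {f} [c|i j k|i|f g _ regf _ regg|f g _ regf _ regg].
- exact: reg_const.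
- by have [regPi _ _] := regPhi i; exact: regPi.
- by have [] := regPhi i.
- exact: reg_add.
- exact: reg_mul.
Qed.

Definition quiver_act (V A : finType) (h t : A -> V) (n : nat)
    (g : V -> 'M[C]_n) (x : A -> 'M[C]_n) (a : A) : 'M[C]_n :=
  g (h a) *m x a *m invmx (g (t a)).

Section SpanningTree.
Variables (V A : finType) (h t : A -> V) (v0 : V).
Hypothesis connected : forall u v, connect (quiver_adj h t) u v.
Local Notation adj := (quiver_adj h t).

Definition reachable_in (v : V) (k : nat) : bool :=
  [exists p : k.-tuple V, path adj v0 p && (last v0 p == v)].

Lemma reachable_in_exists v : exists k, reachable_in v k.
Proof.
have /connectP [p adj_p ->] := connected v0 v.
by exists (size p); apply/existsP; exists (in_tuple p); rewrite /= adj_p eqxx.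
Qed.

Definition depth (v : V) : nat := ex_minn (reachable_in_exists v).

Lemma depth_min v k : reachable_in v k -> (depth v <= k)%N.
Proof. by rewrite /depth; case: ex_minnP => m _; apply. Qed.

Lemma depth_ind (P : V -> Prop) :
  (forall v, (forall w, (depth w < depth v)%N -> P w) -> P v) -> forall v, P v.
Proof.
move=> IH v; move Ek: (depth v) => k; elim/ltn_ind: k v Ek => k IHk v Ek.
by apply: IH => w; rewrite Ek => lt_wk; exact: IHk lt_wk w erefl.
Qed.

Lemma exists_parent v :
  v != v0 -> exists u, adj u v && (depth u < depth v)%N.
Proof.
move=> v_ne; have : reachable_in v (depth v) by rewrite /depth; case: ex_minnP.
case/existsP=> [[p /= /eqP size_p]] /andP [adj_p /eqP last_p].
case/lastP: p size_p adj_p last_p => [|p w] size_p adj_p last_p.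
  by rewrite -last_p eqxx in v_ne.
move: adj_p last_p; rewrite rcons_path last_rcons => /andP [adj_p adj_w] eq_wv; subst w.
exists (last v0 p); rewrite adj_w -size_p size_rcons ltnS.
by apply: depth_min; apply/existsP; exists (in_tuple p); rewrite /= adj_p eqxx.
Qed.

Definition parent (v : V) : V :=
  odflt v0 [pick u | adj u v && (depth u < depth v)%N].

Lemma parentP v : v != v0 -> adj (parent v) v && (depth (parent v) < depth v)%N.
Proof.
move=> v_ne; rewrite /parent; case: pickP => [u //|none].
by have [u] := exists_parent v_ne; rewrite none.
Qed.

Lemma depth_parent v : v != v0 -> (depth (parent v) < depth v)%N.
Proof. by move/parentP/andP=> []. Qed.

Lemma parent_neq v : v != v0 -> parent v != v.
Proof. by move/depth_parent; apply: contraTneq => ->; rewrite ltnn. Qed.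

Definition joins_parent (v : V) (a : A) : bool :=
  ((h a == parent v) && (t a == v)) || ((t a == parent v) && (h a == v)).

Definition parent_arrow (v : V) : option A := [pick a | joins_parent v a].

Lemma parent_arrowP v :
  v != v0 -> exists2 a, parent_arrow v = Some a & joins_parent v a.
Proof.
move/parentP/andP=> [/existsP [a joins_a] _].
rewrite /parent_arrow; case: pickP => [b|none]; first by exists b.
by move: (none a); rewrite /joins_parent joins_a.
Qed.

Lemma parent_arrow_joins v a : parent_arrow v = Some a -> joins_parent v a.
Proof. by rewrite /parent_arrow; case: pickP => // b joins_b [<-]. Qed.

Lemma parent_arrow_inj v w a : v != v0 -> w != v0 ->
  parent_arrow v = Some a -> parent_arrow w = Some a -> v = w.
Proof.
move=> v_ne w_ne /parent_arrow_joins + /parent_arrow_joins.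
rewrite /joins_parent => /orP [] /andP [/eqP hv /eqP tv];
  case/orP=> /andP [/eqP hw /eqP tw]; try congruence.
all: have pw : parent w = v by congruence.
all: have pv : parent v = w by congruence.
all: move: (depth_parent v_ne) (depth_parent w_ne); rewrite pv pw.
all: by move=> /ltn_trans lt /lt; rewrite ltnn.
Qed.

Definition tree_arrows : {set A} :=
  [set a | [exists v, (v != v0) && (parent_arrow v == Some a)]].

Lemma parent_arrow_tree v a :
  v != v0 -> parent_arrow v = Some a -> a \in tree_arrows.
Proof. by move=> v_ne pa_v; rewrite inE; apply/existsP; exists v; rewrite v_ne pa_v eqxx. Qed.

Definition tree_child (a : A) : V :=
  odflt v0 [pick v | (v != v0) && (parent_arrow v == Some a)].

Lemma tree_childP a : a \in tree_arrows ->
  (tree_child a != v0) && (parent_arrow (tree_child a) == Some a).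
Proof.
rewrite inE /tree_child => /existsP [v child_v]; case: pickP => [u //|none].
by rewrite none in child_v.
Qed.

Lemma card_tree_arrows : #|tree_arrows| = #|V|.-1.
Proof.
have child_inj : {in tree_arrows &, injective tree_child}.
  move=> a b /tree_childP/andP [_ /eqP pa_a] /tree_childP/andP [_ /eqP pa_b] eq_ab.
  by move: pa_b; rewrite -eq_ab pa_a => -[].
rewrite -(card_in_imset child_inj) -(cardsC1 v0); congr #|pred_of_set _|.
apply/setP => v; rewrite !inE; apply/imsetP/idP => [[a /tree_childP/andP [c_ne _] ->] //|v_ne].
have [a pa_v _] := parent_arrowP v_ne; have tree_a := parent_arrow_tree v_ne pa_v.
exists a => //; have /andP [c_ne /eqP pa_c] := tree_childP tree_a.
exact: parent_arrow_inj pa_v pa_c.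
Qed.

Lemma sum_enum_val_eq (u : 'rV[rat]_#|V|) (x : V) :
  \sum_j u 0 j * (enum_val j == x)%:R = u 0 (enum_rank x).
Proof.
rewrite (bigD1 (enum_rank x)) //= enum_rankK eqxx mulr1 big1 ?addr0 // => j.
by apply: contraNeq; rewrite mulf_eq0 negb_or pnatr_eq0 eqb0 negbK => /andP [_ /eqP <-];
  rewrite enum_valK.
Qed.

Lemma boundary_mx_mul_tr (u : 'rV[rat]_#|V|) (i : 'I_#|A|) :
  (u *m (boundary_mx h t)^T) 0 i =
  u 0 (enum_rank (h (enum_val i))) - u 0 (enum_rank (t (enum_val i))).
Proof.
by rewrite mxE -!sum_enum_val_eq -sumrB; apply: eq_bigr => j _; rewrite !mxE mulrBr.
Qed.

Lemma left_kernel_boundary_const (u : 'rV[rat]_#|V|) :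
  u *m (boundary_mx h t)^T = 0 -> forall v, u 0 (enum_rank v) = u 0 (enum_rank v0).
Proof.
move=> u_ker; have u_adj x y : adj x y -> u 0 (enum_rank x) = u 0 (enum_rank y).
  case/existsP=> a ends_a; move/rowP/(_ (enum_rank a))/eqP: u_ker.
  rewrite boundary_mx_mul_tr mxE enum_rankK subr_eq0 => /eqP.
  by case/orP: ends_a => /andP [/eqP <- /eqP <-].
move=> v; have /connectP [p adj_p ->] := connected v0 v.
by elim: p v0 adj_p => [|y p IHp] x //= /andP [adj_xy /IHp ->]; rewrite (u_adj _ _ adj_xy).
Qed.

(* Connectedness makes the left kernel of [d_1] the line of constant vectors. *)
Lemma rank_boundary_mx : \rank (boundary_mx h t) = #|V|.-1.
Proof.
set B := boundary_mx h t; pose one : 'rV[rat]_#|V| := const_mx 1.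
have one_ker : one *m B^T = 0 by apply/rowP => i; rewrite boundary_mx_mul_tr !mxE subrr.
have ker_one : (kermx B^T == one)%MS.
  apply/andP; split; last by rewrite sub_kermx one_ker.
  apply/row_subP => i.
  have row_ker : row i (kermx B^T) *m B^T = 0 by rewrite -row_mul mulmx_ker row0.
  suff -> : row i (kermx B^T) = row i (kermx B^T) 0 (enum_rank v0) *: one.
    exact: scalemx_sub.
  apply/rowP => j; rewrite !mxE mulr1.
  by have := left_kernel_boundary_const row_ker (enum_val j); rewrite enum_valK !mxE.
have rank_one : \rank one = 1%N.
  rewrite rank_rV; apply/eqP; rewrite eqb1; apply/eqP.
  by move/rowP/(_ (enum_rank v0))/eqP; rewrite !mxE oner_eq0.
have := mxrank_ker B^T; rewrite (eqmxP ker_one) rank_one mxrank_tr => rank_eq.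
by rewrite -subn1 rank_eq subKn // rank_leq_col.
Qed.

Lemma b1_card_cotree : b1 h t = #|~: tree_arrows|.
Proof. by rewrite /b1 rank_boundary_mx -card_tree_arrows [RHS]cardsCs setCK. Qed.

Section Gauge.
Variable n : nat.
Local Notation M := 'M[C]_n.
Local Notation act := (quiver_act h t).
Implicit Types (x : A -> M) (g : V -> M).

(* Oriented so that [act (gauge x) x] is the identity on tree arrows. *)
Definition tree_step x v : M :=
  if parent_arrow v is Some a then (if h a == v then invmx (x a) else x a) else 1%:M.

Fixpoint tree_path_prod (step : V -> M) (k : nat) (v : V) : M :=
  if k is k'.+1 then
    if v == v0 then 1%:M else tree_path_prod step k' (parent v) *m step v
  else 1%:M.

Lemma tree_path_prod_fuel step v k k' : (depth v < k)%N -> (depth v < k')%N ->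
  tree_path_prod step k v = tree_path_prod step k' v.
Proof.
elim: k k' v => [//|k IHk] [//|k'] v /= ltk ltk'; case: eqP => // /eqP v_ne.
by have lt_pv := depth_parent v_ne; rewrite (IHk k') //; apply: leq_trans lt_pv _.
Qed.

(* Fuel [depth v + 1] suffices, as depth strictly decreases along the path to the root. *)
Definition gauge x v : M := tree_path_prod (tree_step x) (depth v).+1 v.

Lemma gaugeE x v :
  gauge x v = if v == v0 then 1%:M else gauge x (parent v) *m tree_step x v.
Proof.
rewrite /gauge /=; case: eqP => // /eqP v_ne.
by rewrite (tree_path_prod_fuel _ (depth_parent v_ne) (ltnSn _)).
Qed.

Lemma gauge_unit x v : (forall a, x a \in unitmx) -> gauge x v \in unitmx.
Proof.
move=> ux; elim/depth_ind: v => v IHv; rewrite gaugeE; case: eqP => [_|/eqP v_ne].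
  exact: unitmx1.
rewrite unitmx_mul IHv ?depth_parent // /tree_step.
by case: (parent_arrow v) => [a|]; rewrite ?unitmx1 //; case: ifP; rewrite ?unitmx_inv ux.
Qed.

Lemma regular_GL_gauge v : regular_GL (fun x : GLtup A n => gauge (sval x) v).
Proof.
suff reg_prod k : regular_GL (fun x : GLtup A n => tree_path_prod (tree_step (sval x)) k v).
  exact: reg_prod.
elim: k v => [|k IHk] v /=; first exact: regular_GL1.
case: eqP => _; first exact: regular_GL1.
apply: regular_GL_mul; first exact: IHk.
rewrite /tree_step.
case: (parent_arrow v) => [a|]; last exact: regular_GL1.
by case: (h a == v); [apply: regular_GL_inv|]; exact: regular_GL_coord.
Qed.

Lemma quiver_act_gauge_tree x a : (forall a, x a \in unitmx) ->
  a \in tree_arrows -> act (gauge x) x a = 1%:M.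
Proof.
move=> ux /tree_childP/andP [c_ne /eqP pa_c]; set v := tree_child a in c_ne pa_c.
have uGp := gauge_unit (parent v) ux; rewrite /quiver_act.
case/orP: (parent_arrow_joins pa_c) => [/andP [/eqP ha /eqP ta]|/andP [/eqP ta /eqP ha]].
  rewrite ta (gaugeE x v) (negbTE c_ne) /tree_step pa_c ha (negbTE (parent_neq c_ne)).
  by rewrite mulmxV // unitmx_mul uGp ux.
rewrite ha (gaugeE x v) (negbTE c_ne) /tree_step pa_c ha eqxx ta.
by rewrite mulmxKV ?mulmxV.
Qed.

Lemma gauge_quiver_act g x v : (forall w, g w \in unitmx) ->
  (forall a, x a \in unitmx) -> gauge (act g x) v = g v0 *m gauge x v *m invmx (g v).
Proof.
move=> ug ux; elim/depth_ind: v => v IHv; rewrite !(gaugeE _ v).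
case: eqP => [->|/eqP v_ne]; first by rewrite mulmx1 mulmxV.
rewrite IHv ?depth_parent // /tree_step; have [a -> joins_a] := parent_arrowP v_ne.
rewrite /quiver_act; case/orP: joins_a => /andP [/eqP -> /eqP ->].
  by rewrite (negbTE (parent_neq v_ne)) !mulmxA mulmxKV.
rewrite eqxx !invmx_mul ?unitmx_mul ?unitmx_inv ?ug ?ux // invmxK.
by rewrite !mulmxA mulmxKV.
Qed.

Lemma gauge_tree_trivial x v :
  {in tree_arrows, forall a, x a = 1%:M} -> gauge x v = 1%:M.
Proof.
move=> x_tree; elim/depth_ind: v => v IHv; rewrite gaugeE; case: eqP => // /eqP v_ne.
rewrite IHv ?depth_parent // mul1mx /tree_step; have [a pa_v _] := parent_arrowP v_ne.
by rewrite pa_v x_tree ?(parent_arrow_tree v_ne) // invmx1 if_same.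
Qed.

End Gauge.

Section TreeGaugeSlice.
Variable n : nat.
Local Notation M := 'M[C]_n.
Local Notation r := (b1 h t).
Local Notation act := (quiver_act h t).

Definition cotree_arrow (i : 'I_r) : A := enum_val (cast_ord b1_card_cotree i).

Lemma cotree_arrow_notin_tree i : cotree_arrow i \notin tree_arrows.
Proof. by have := enum_valP (cast_ord b1_card_cotree i); rewrite inE. Qed.

Lemma cotree_arrow_inj : injective cotree_arrow.
Proof. by move=> i j /enum_val_inj /cast_ord_inj. Qed.

Lemma cotree_arrow_onto a : a \notin tree_arrows -> exists i, cotree_arrow i = a.
Proof.
rewrite -in_setC => cotree_a.
exists (cast_ord (esym b1_card_cotree) (enum_rank_in cotree_a a)).
by rewrite /cotree_arrow cast_ordKV enum_rankK_in.
Qed.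

Definition extend (y : 'I_r -> M) (a : A) : M :=
  if [pick i | cotree_arrow i == a] is Some i then y i else 1%:M.

Lemma extend_cotree y i : extend y (cotree_arrow i) = y i.
Proof.
rewrite /extend; case: pickP => [j /eqP /cotree_arrow_inj -> //|none].
by move: (none i); rewrite eqxx.
Qed.

Lemma extend_tree y a : a \in tree_arrows -> extend y a = 1%:M.
Proof.
move=> tree_a; rewrite /extend; case: pickP => // i /eqP ea.
by move: (cotree_arrow_notin_tree i); rewrite ea tree_a.
Qed.

Lemma extend_unit (y : GLtup 'I_r n) a : extend (sval y) a \in unitmx.
Proof. by rewrite /extend; case: pickP => [i _|_]; [exact: (svalP y) | exact: unitmx1]. Qed.

Definition embed (y : GLtup 'I_r n) : GLtup A n := exist _ (extend (sval y)) (extend_unit y).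

Definition gauge_fix (x : A -> M) : A -> M := act (gauge x) x.

Lemma gauge_fix_unit (x : GLtup A n) a : gauge_fix (sval x) a \in unitmx.
Proof.
have ux := svalP x.
by rewrite !unitmx_mul unitmx_inv !gauge_unit ?ux.
Qed.

Definition restrict (x : GLtup A n) : GLtup 'I_r n :=
  exist (fun y => forall i, y i \in unitmx) (fun i => gauge_fix (sval x) (cotree_arrow i))
    (fun i => gauge_fix_unit x (cotree_arrow i)).

Lemma restrict_embed y : restrict (embed y) = y.
Proof.
apply: GLtup_eq; apply: functional_extensionality => i /=.
have gauge1 v : gauge (extend (sval y)) v = 1%:M.
  by apply: gauge_tree_trivial => a; exact: extend_tree.
by rewrite /gauge_fix /quiver_act !gauge1 invmx1 mulmx1 mul1mx extend_cotree.
Qed.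

Lemma extend_restrict x : extend (sval (restrict x)) = gauge_fix (sval x).
Proof.
apply: functional_extensionality => a /=.
have [tree_a|/cotree_arrow_onto [i <-]] := boolP (a \in tree_arrows).
  by rewrite extend_tree // /gauge_fix quiver_act_gauge_tree //; exact: (svalP x).
by rewrite extend_cotree.
Qed.

Lemma gauge_fix_quiver_act g x a : (forall w, g w \in unitmx) ->
  (forall a, x a \in unitmx) ->
  gauge_fix (act g x) a = g v0 *m gauge_fix x a *m invmx (g v0).
Proof.
move=> ug ux; rewrite /gauge_fix /quiver_act !gauge_quiver_act //.
rewrite !invmx_mul ?unitmx_mul ?unitmx_inv ?ug ?gauge_unit // invmxK.
by rewrite !mulmxA !mulmxKV.
Qed.

Lemma regular_comp_embed f : regular f -> regular (fun y => f (embed y)).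
Proof.
apply: regular_comp => a; rewrite /embed /extend /=.
by case: pickP => [i _|_]; [exact: regular_GL_coord | exact: regular_GL1].
Qed.

Lemma regular_comp_restrict F : regular F -> regular (fun x => F (restrict x)).
Proof.
apply: regular_comp => i; rewrite /restrict /gauge_fix /quiver_act /=.
apply: regular_GL_mul; last exact/regular_GL_inv/regular_GL_gauge.
by apply: regular_GL_mul; [exact: regular_GL_gauge | exact: regular_GL_coord].
Qed.

Lemma conj_invariant_comp_embed f :
  quiver_invariant h t f -> conj_invariant (fun y => f (embed y)).
Proof.
move=> f_inv g y ug uy /=.
have uy' a : g *m extend (sval y) a *m invmx g \in unitmx.
  by rewrite !unitmx_mul unitmx_inv ug extend_unit.
rewrite -(f_inv (fun=> g) (embed y) (fun=> ug) uy'); congr f; apply: GLtup_eq.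
apply: functional_extensionality => a /=; rewrite /extend.
by case: pickP => [//|_]; rewrite mulmx1 mulmxV.
Qed.

Lemma quiver_invariant_embed_restrict f x :
  quiver_invariant h t f -> f (embed (restrict x)) = f x.
Proof.
move=> f_inv; have ux := svalP x.
rewrite -(f_inv (gauge (sval x)) x (fun v => gauge_unit v ux) (gauge_fix_unit x)).
by congr f; apply: GLtup_eq; rewrite /= extend_restrict.
Qed.

Lemma quiver_invariant_comp_restrict F :
  conj_invariant F -> quiver_invariant h t (fun x => F (restrict x)).
Proof.
move=> F_inv g x ug ugx /=; have ux := svalP x.
have ux' i : g v0 *m sval (restrict x) i *m invmx (g v0) \in unitmx.
  by rewrite 2!unitmx_mul unitmx_inv ug gauge_fix_unit.
rewrite -(F_inv (g v0) (restrict x) (ug v0) ux'); congr F; apply: GLtup_eq.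
by apply: functional_extensionality => i /=; rewrite gauge_fix_quiver_act.
Qed.

Lemma restriction_calg_iso :
  calg_iso (@quiver_inv_fun V A h t n) (@charvar_fun r n) (fun f y => f (embed y)).
Proof.
split=> // [f [reg_f inv_f]|f1 f2 [_ inv_f1] [_ inv_f2] eq_f|F [reg_F inv_F]].
- by split; [exact: regular_comp_embed | exact: conj_invariant_comp_embed].
- apply: functional_extensionality => x.
  rewrite -(quiver_invariant_embed_restrict x inv_f1).
  by rewrite -(quiver_invariant_embed_restrict x inv_f2) (congr1 (fun F => F (restrict x)) eq_f).
- exists (fun x => F (restrict x)).
    by split; [exact: regular_comp_restrict | exact: quiver_invariant_comp_restrict].
  by apply: functional_extensionality => y; rewrite restrict_embed.
Qed.

End TreeGaugeSlice.

End SpanningTree.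

Theorem corollary5p2 (V A : finType) (h t : A -> V) (n : nat) :
  quiver_connected h t ->
  exists phi : (GLtup A n -> C) -> (GLtup 'I_(b1 h t) n -> C),
    calg_iso (@quiver_inv_fun V A h t n) (@charvar_fun (b1 h t) n) phi.
Proof.
case=> /card_gt0P [v0 _] connected.
by eexists; exact: restriction_calg_iso v0 connected n.
Qed.
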